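(* Consider the delay differential equation initial value problem $$\dot u(t)=f\bigl(t,u(t),u(t-\tau(t,u(t)))\bigr),\quad t\ge t_0,\qquad u(t_0+\theta)=\phi(\theta)\ \text{for } \theta\in[-\tau_{\max},0],$$ with $f$ smooth, and suppose its solution $u$ has a breaking point $\xi_j>t_0$ of order $k$. Let $\xi(h)$ be the mesh point $t_n$ of the numerical mesh (with step size $h$) nearest to $\xi_j$. Then a necessary condition for an explicit functional continuous Runge–Kutta (FCRK) method to have global order $p>k$ on this problem is that $$\xi(h)-\xi_j=\mathcal{O}\bigl(h^{p/(k+1)}\bigr).$$
   Context: A breaking point of order $k$ of the solution $u$ is a point $\xi$ at which all derivatives of $u$ up to the $k$-th exist and the $k$-th derivative is Lipschitz continuous, while the $(k+1)$-st derivative may be discontinuous there (so the Taylor expansions of $u$ from the left and from the right of $\xi$ agree up to order $k$ but may differ from order $k+1$ on). An explicit $s$-stage FCRK method with mesh $t_0<t_1<\dots$, steps $h_n=t_{n+1}-t_n$, computes a continuous approximation $u^h$ by $u^h(t_n+\theta h_n)=u^h(t_n)+h_n\sum_{i=1}^s b_i(\theta)k_{n,i}$ for $\theta\in(0,1]$, with stages $U_{n,i}=u^h(t_n)+h_n\sum_{j<i}a_{ij}k_{n,j}$ and $k_{n,i}=f\bigl(t_n+c_ih_n,U_{n,i},\eta_{n,i}(t_n+c_ih_n-\tau(t_n+c_ih_n,U_{n,i}))\bigr)$, where $\eta_{n,i}(t)$ equals $\phi$ for $t\le t_0$, $u^h(t)$ for $t\in[t_0,t_n]$, and $u^h(t_n)+h_n\sum_{j<i}a_{ij}(\theta)k_{n,j}$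 with $\theta=(t-t_n)/h_n$ for $t>t_n$. The method has global (uniform) order $p$ if $\sup_{t}\|u(t)-u^h(t)\|=\mathcal{O}(h^p)$ over the computational interval as the step size $h\to0$. *)

From HB Require Import structures.
From mathcomp Require Import all_boot all_order all_algebra.
From mathcomp Require Import all_classical all_reals all_analysis.
Set Implicit Arguments. Unset Strict Implicit. Unset Printing Implicit Defensive.
Import Order.TTheory GRing.Theory Num.Theory.
Import numFieldNormedType.Exports.
Local Open Scope classical_set_scope.
Local Open Scope ring_scope.

Section Defs.
Variable R : realType.

Fixpoint Cn {U W : normedModType R} (n : nat) (g : U -> W) : Prop :=
  match n with
  | 0 => continuous g
  | m.+1 => (forall x, differentiable g x) /\
            (forall v : U, Cn m (fun x => 'D_v g x))
  end.
Definition smooth {U W : normedModType R} (g : U -> W) : Prop :=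
  forall n, Cn n g.

Definition breaking_point {V : normedModType R} (u : R -> V) (xi : R) (k : nat)
  : Prop :=
  exists delta : R, 0 < delta /\
   (forall m x, (m < k)%N -> `|x - xi| < delta -> derivable (derive1n m u) x 1) /\
   (exists L : R, forall x y, `|x - xi| < delta -> `|y - xi| < delta ->
       `|derive1n k u x - derive1n k u y| <= L * `|x - y|) /\
   (forall x, `|x - xi| < delta -> x != xi -> derivable (derive1n k u) x 1) /\
   exists Jm Jp : V, Jm != Jp /\
     (derive1n k.+1 u x @[x --> xi^'-] --> Jm) /\
     (derive1n k.+1 u x @[x --> xi^'+] --> Jp).

Definition dde_solution {V : normedModType R}
  (f : R -> V -> V -> V) (tau : R -> V -> R) (taumax : R) (phi : R -> V)
  (t0 T : R) (u : R -> V) : Prop :=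
  (forall th, - taumax <= th <= 0 -> u (t0 + th) = phi th) /\
  {within `[t0, T], continuous u} /\
  (forall t, t0 < t < T ->
     derivable u t 1 /\ derive1 u t = f t (u t) (u (t - tau t (u t)))).

(* Tableau: a i j (constants, j < i), continuous extensions aext i j (theta)
   (polynomials), weights b i (theta) (polynomials), nodes c i. Indices are nats,
   only 0 <= j < i < s are used. *)
Record fcrk (s : nat) := FCRK {
  rk_a : nat -> nat -> R;
  rk_aext : nat -> nat -> {poly R};
  rk_b : nat -> {poly R};
  rk_c : nat -> R }.

Section Step.
Variables (V : normedModType R) (s : nat) (M : fcrk s).
Variables (f : R -> V -> V -> V) (tau : R -> V -> R).
(* one step from tn with step hn, given the approximation prev valid on
   (-oo, tn] (phi for t <= t0, u^h on [t0,tn]) *)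
Variables (prev : R -> V) (tn hn : R).

Definition stage_eta (i : nat) (ks : seq V) (x : R) : V :=
  if x <= tn then prev x
  else prev tn + hn *: \sum_(j < i) ((rk_aext M i j).[(x - tn) / hn] *: nth 0 ks j).

Definition stage_new (i : nat) (ks : seq V) : V :=
  let U := prev tn + hn *: \sum_(j < i) (rk_a M i j *: nth 0 ks j) in
  let td := tn + rk_c M i * hn in
  f td U (stage_eta i ks (td - tau td U)).

Fixpoint stages (m : nat) : seq V :=
  match m with
  | 0 => [::]
  | m'.+1 => let ks := stages m' in rcons ks (stage_new m' ks)
  end.

Definition step_output (x : R) : V :=
  if x <= tn then prev x
  else prev tn + hn *: \sum_(i < s) ((rk_b M i).[(x - tn) / hn] *: nth 0 (stages s) i).
End Step.

(* fcrk_sol ... mesh n : the numerical solution u^h, valid on (-oo, mesh n];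
   for x <= t0 it equals phi (x - t0). *)
Fixpoint fcrk_sol {V : normedModType R} {s} (M : fcrk s)
  (f : R -> V -> V -> V) (tau : R -> V -> R) (phi : R -> V) (t0 : R)
  (mesh : nat -> R) (n : nat) : R -> V :=
  match n with
  | 0 => fun x => phi (x - t0)
  | n'.+1 => step_output M f tau (fcrk_sol M f tau phi t0 mesh n')
               (mesh n') (mesh n'.+1 - mesh n')
  end.

Definition mesh_family (mesh : R -> nat -> R) (t0 T h0 : R) : Prop :=
  0 < h0 /\
  forall h, 0 < h <= h0 ->
    mesh h 0%N = t0 /\
    (forall n, mesh h n < mesh h n.+1) /\
    (forall n, mesh h n.+1 - mesh h n <= h) /\
    (exists N, T <= mesh h N).

Definition has_global_order {V : normedModType R} {s} (M : fcrk s)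
  (f : R -> V -> V -> V) (tau : R -> V -> R) (phi : R -> V) (t0 T : R)
  (mesh : R -> nat -> R) (u : R -> V) (p : nat) : Prop :=
  exists C h1 : R, 0 < h1 /\ forall h, 0 < h <= h1 ->
    forall n x, t0 <= x <= T -> x <= mesh h n ->
      `|u x - fcrk_sol M f tau phi t0 (mesh h) n x| <= C * h ^+ p.

End Defs.

From HB Require Import structures.
From mathcomp Require Import all_boot all_order all_algebra.
From mathcomp Require Import all_classical all_reals all_analysis.
From mathcomp Require Import lra ring.
Set Implicit Arguments. Unset Strict Implicit. Unset Printing Implicit Defensive.
Import Order.TTheory GRing.Theory Num.Theory.
Import numFieldNormedType.Exports.
Local Open Scope classical_set_scope.
Local Open Scope ring_scope.

(* Work in a coordinate in which the (k+1)-st derivative of u jumps at xi, from Jm to Jp.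
   If the mesh point nearest to xi is at distance dd > 0, then (xi - dd, xi + dd) lies inside
   a single step, on which the FCRK output is a polynomial of degree < N, with N depending on
   the method only. So the N-th forward difference of u with spacing dl = dd / (N + 1), over
   nodes all but the last of which lie left of xi, is that of the global error, at most
   2^N C h^p. Subtracting the left Taylor polynomial of degree k + 1 < N does not change this
   difference, and what remains is dominated by the jump term at the last node,
   (Jp - Jm) (dl / 2)^(k+1) / (k+1)!. Hence dd^(k+1) = O(h^p). *)

Section FiniteDifferences.
Variable R : realType.

Fixpoint fwd_diff {V : zmodType} (N : nat) (g : R -> V) (dl x : R) : V :=
  if N is N'.+1 then fwd_diff N' g dl (x + dl) - fwd_diff N' g dl x else g x.

Lemma fwd_diff_shift (V : zmodType) N (g : R -> V) dl x :
  fwd_diff N g dl (x + dl) = fwd_diff N (fun y => g (y + dl)) dl x.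
Proof. by elim: N x => [|N IH] x //=; rewrite !IH. Qed.

Lemma fwd_diffB (V : zmodType) N (g1 g2 : R -> V) dl x :
  fwd_diff N (fun y => g1 y - g2 y) dl x = fwd_diff N g1 dl x - fwd_diff N g2 dl x.
Proof. by elim: N x => [|N IH] x //=; rewrite !IH !opprD addrACA !opprK. Qed.

Lemma size_comp_XaddC_subr (q : {poly R}) c N :
  (size q <= N.+1)%N -> (size (q \Po ('X + c%:P) - q)%R <= N)%N.
Proof.
move=> sq; have size_comp : size (q \Po ('X + c%:P)) = size q.
  by rewrite size_comp_poly2 // size_XaddC.
apply/leq_sizeP => j; rewrite leq_eqVlt => /predU1P[<-|Nj]; last first.
  by rewrite coefB !nth_default ?subrr ?size_comp // (leq_trans sq).
rewrite coefB; have [sqN|Nsq] := ltnP (size q) N.+1.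
  by rewrite !nth_default ?subrr ?size_comp.
have {Nsq} sqN : size q = N.+1 by apply/anti_leq; rewrite sq Nsq.
have XaddC_gt1 : (1 < size ('X + c%:P)%R)%N by rewrite size_XaddC.
have := lead_coef_comp q XaddC_gt1.
rewrite lead_coefXaddC expr1n mulr1 /lead_coef size_comp sqN => ->.
by rewrite subrr.
Qed.

Lemma fwd_diff_horner N (q : {poly R}) dl x :
  (size q <= N)%N -> fwd_diff N (horner q) dl x = 0.
Proof.
elim: N q x => [|N IH] q x sq /=.
  by move: sq; rewrite leqn0 size_poly_eq0 => /eqP ->; rewrite horner0.
rewrite fwd_diff_shift -fwd_diffB -(IH _ x (size_comp_XaddC_subr dl sq)).
by congr fwd_diff; apply/funext => y; rewrite !hornerE horner_comp !hornerE.
Qed.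

Lemma ler_fwd_diff (V : normedModType R) N (g : R -> V) dl x B :
  (forall i, (i <= N)%N -> `|g (x + dl *+ i)| <= B) ->
  `|fwd_diff N g dl x| <= 2 ^+ N * B.
Proof.
elim: N x => [|N IH] x gB /=; first by rewrite expr0 mul1r -[x]addr0 -(mulr0n dl); apply: gB.
rewrite exprS -mulrA mulr2n mulrDl mul1r (le_trans (ler_normB _ _)) // lerD //.
  by apply: IH => i iN; rewrite -addrA -mulrS; apply: gB.
by apply: IH => i iN; apply: gB; apply: leqW.
Qed.

Lemma ler_fwd_diff_last (V : normedModType R) N (g : R -> V) dl x B : 0 <= B ->
  (forall i, (i < N)%N -> `|g (x + dl *+ i)| <= B) ->
  `|fwd_diff N g dl x - g (x + dl *+ N)| <= 2 ^+ N * B.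
Proof.
move=> B_ge0; elim: N x => [|N IH] x gB /=.
  by rewrite mulr0n addr0 subrr normr0 expr0 mul1r.
rewrite exprS -mulrA mulr2n mulrDl mul1r addrAC mulrS addrA.
rewrite (le_trans (ler_normB _ _)) // lerD //.
  by apply: IH => i iN; rewrite -addrA -mulrS; apply: gB.
by apply: ler_fwd_diff => i iN; apply: gB.
Qed.

Lemma ler_fwd_diff_lower (V : normedModType R) N (g : R -> V) dl x (w : V) B C :
  0 <= B -> (forall i, (i < N)%N -> `|g (x + dl *+ i)| <= B) ->
  `|g (x + dl *+ N) - w| <= C ->
  `|w| - 2 ^+ N * B - C <= `|fwd_diff N g dl x|.
Proof.
move=> B_ge0 gB gw; have last_B := ler_fwd_diff_last B_ge0 gB.
set d := fwd_diff N g dl x; set gN := g (x + dl *+ N).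
have wE : w = d - ((d - gN) + (gN - w)).
  by rewrite addrA subrK opprB addrC subrK.
have := ler_normB d ((d - gN) + (gN - w)); rewrite -wE.
have := ler_normD (d - gN) (gN - w); lra.
Qed.

End FiniteDifferences.

Section TaylorRemainder.
Variable R : realType.

Definition taylor_poly (c : nat -> R) (xi : R) (m : nat) : {poly R} :=
  \poly_(i < m) (c i / i`!%:R) \Po ('X - xi%:P).

Lemma horner_taylor_poly c xi m x :
  (taylor_poly c xi m).[x] = \sum_(i < m) c i / i`!%:R * (x - xi) ^+ i.
Proof. by rewrite horner_comp !hornerE horner_poly. Qed.

Lemma taylor_poly_center c xi m : (taylor_poly c xi m.+1).[xi] = c 0%N.
Proof.
rewrite horner_taylor_poly big_ord_recl subrr expr0 fact0 divr1 mulr1 big1 ?addr0 //.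
by move=> i _; rewrite expr0n mulr0.
Qed.

Lemma deriv_taylor_poly c xi m :
  (taylor_poly c xi m.+1)^`() = taylor_poly (fun i => c i.+1) xi m.
Proof.
rewrite deriv_comp derivXsubC mulr1; congr (_ \Po _).
apply/polyP => i; rewrite coef_deriv !coef_poly ltnS; case: ltnP => _; last by rewrite mul0rn.
rewrite factS natrM -mulr_natr; field.
by rewrite nat1r !pnatr_eq0 -lt0n fact_gt0.
Qed.

Lemma size_taylor_poly c xi m : (size (taylor_poly c xi m) <= m)%N.
Proof. by rewrite size_comp_poly2 ?size_XsubC // size_poly. Qed.

Lemma ler_dist_is_derive (H dH : R -> R) (x y B : R) :
  (forall t, t \in `]Num.min x y, Num.max x y[ -> is_derive t 1 H (dH t)) ->
  {within `[Num.min x y, Num.max x y], continuous H} ->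
  (forall t, t \in `]Num.min x y, Num.max x y[ -> `|dH t| <= B) ->
  `|H y - H x| <= B * `|y - x|.
Proof.
wlog xy : x y / x <= y => [W|].
  have [/W//|yx] := orP (le_total x y).
  by rewrite distrC (distrC y) minC maxC; exact: W.
rewrite (min_l xy) (max_r xy) => Hd Hc HB.
move: xy; rewrite le_eqVlt => /predU1P[<-|xy]; first by rewrite !subrr normr0 mulr0.
have [t txy ->] := MVT xy Hd Hc.
by rewrite normrM ler_wpM2r // HB.
Qed.

Lemma in_itv_between (a b x y t : R) : a <= x <= b -> a < y < b ->
  t \in `]Num.min x y, Num.max x y[ -> [/\ a < t < b, t != x & `|t - x| <= `|y - x|].
Proof.
move=> /andP[ax xb] /andP[ay yb]; rewrite in_itv /=.
have [xy|yx] := leP x y.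
  move=> /andP[xt ty].
  by split; [apply/andP; split; lra | rewrite gt_eqF | rewrite !ger0_norm; lra].
move=> /andP[yt tx].
by split; [apply/andP; split; lra | rewrite lt_eqF | rewrite !ler0_norm; lra].
Qed.

Lemma taylor_remainder m (F : nat -> R -> R) (c : nat -> R) (a b xi eps : R) :
  a <= xi <= b ->
  (forall j t, (j < m)%N -> a < t < b -> t != xi -> is_derive t 1 (F j) (F j.+1 t)) ->
  (forall j, (j < m)%N -> {within `[a, b], continuous (F j)}) ->
  (forall j, (j < m)%N -> F j xi = c j) ->
  (forall t, a < t < b -> t != xi -> `|F m t - c m| <= eps) ->
  forall x, a < x < b -> x != xi ->
  `|F 0%N x - (taylor_poly c xi m.+1).[x]| <= eps * `|x - xi| ^+ m.
Proof.
move=> xi_ab; elim: m F c => [|m IH] F c Fd Fc Fxi Fm x xab xxi.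
  rewrite expr0 mulr1 horner_taylor_poly big_ord1 fact0 divr1 expr0 mulr1.
  exact: Fm.
have eps_ge0 : 0 <= eps by apply: le_trans (Fm x xab xxi).
have IHS := IH (fun j => F j.+1) (fun j => c j.+1) (fun j t jm => Fd j.+1 t jm)
  (fun j jm => Fc j.+1 jm) (fun j jm => Fxi j.+1 jm) Fm.
set q := taylor_poly c xi m.+2.
have -> : F 0%N x - q.[x] = (F 0%N x - q.[x]) - (F 0%N xi - q.[xi]).
  by rewrite taylor_poly_center Fxi // subrr subr0.
have sub_ab : `[Num.min xi x, Num.max xi x] `<=` `[a, b].
  move: xi_ab xab => /andP[axi xib] /andP[ax xb].
  by apply: subset_itv; rewrite bnd_simp ?le_min ?ge_max ?axi ?xib ?ltW.
rewrite exprSr mulrA; apply: (ler_dist_is_derive (H := fun t => F 0%N t - q.[t])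
  (dH := fun t => F 1%N t - q^`().[t])).
- move=> t /(in_itv_between xi_ab xab)[tab txi _].
  exact: is_deriveB (Fd 0%N t _ tab txi) (is_derive_poly q t).
- move=> t; apply: continuousB; last exact/continuous_subspaceT/continuous_horner.
  exact: continuous_subspaceW sub_ab (Fc 0%N _) t.
- move=> t /(in_itv_between xi_ab xab)[tab txi tx].
  rewrite deriv_taylor_poly; apply: le_trans (IHS t tab txi) _.
  by rewrite ler_wpM2l // lerXn2r // nnegrE.
Qed.

End TaylorRemainder.

Section JumpDetection.
Variable R : realType.
Variables (F : nat -> R -> R) (xi delta Jm Jp : R) (k : nat).
Hypothesis delta_gt0 : 0 < delta.
Hypothesis F_derive : forall j t, (j <= k)%N -> `|t - xi| < delta -> t != xi ->
  is_derive t 1 (F j) (F j.+1 t).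
Hypothesis F_cont : forall j, (j <= k)%N -> {for xi, continuous (F j)}.
Hypothesis F_left : F k.+1 t @[t --> xi^'-] --> Jm.
Hypothesis F_right : F k.+1 t @[t --> xi^'+] --> Jp.

Let coef (J : R) (j : nat) : R := if (j <= k)%N then F j xi else J.
Let QL := taylor_poly (coef Jm) xi k.+2.
Let QR := taylor_poly (coef Jp) xi k.+2.

Lemma taylor_jump (J eps a b : R) : a <= xi <= b -> xi - delta < a -> b < xi + delta ->
  (forall t, a < t < b -> t != xi -> `|F k.+1 t - J| <= eps) ->
  forall x, a < x < b -> x != xi ->
  `|F 0%N x - (taylor_poly (coef J) xi k.+2).[x]| <= eps * `|x - xi| ^+ k.+1.
Proof.
move=> xi_ab a_gt b_lt FJ.
have near_xi t : a <= t <= b -> `|t - xi| < delta.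
  by move=> /andP[a_t t_b]; rewrite ltr_norml; apply/andP; split; lra.
apply: taylor_remainder => //.
- move=> j t jk /andP[a_t t_b] txi; apply: F_derive => //.
  by apply: near_xi; rewrite !ltW.
- move=> j jk; apply: continuous_in_subspaceT => t.
  rewrite inE /= in_itv /= => /near_xi t_xi.
  have [->|txi] := eqVneq t xi; first exact: F_cont.
  have [dF _] := F_derive jk t_xi txi.
  exact/differentiable_continuous/derivable1_diffP.
- by move=> j jk; rewrite /coef -ltnS jk.
- by rewrite /coef ltnn.
Qed.

Lemma taylor_poly_jump x :
  QR.[x] - QL.[x] = (Jp - Jm) / (k.+1)`!%:R * (x - xi) ^+ k.+1.
Proof.
rewrite /QL /QR !horner_taylor_poly !(big_ord_recr k.+1) /= /coef ltnn opprD addrACA.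
rewrite -sumrB big1 ?add0r => [|i _]; first by rewrite -!mulrBl.
by rewrite -ltnS ltn_ord subrr.
Qed.

Lemma one_sided_taylor eps : 0 < eps -> exists2 rho, 0 < rho &
  (forall x, xi - rho < x < xi -> `|F 0%N x - QL.[x]| <= eps * `|x - xi| ^+ k.+1) /\
  (forall x, xi < x < xi + rho -> `|F 0%N x - QR.[x]| <= eps * `|x - xi| ^+ k.+1).
Proof.
move=> eps_gt0.
have [rm rm_gt0 Fm] := (cvgrPdist_le _ _).1 F_left eps eps_gt0.
have [rp rp_gt0 Fp] := (cvgrPdist_le _ _).1 F_right eps eps_gt0.
pose rho := Num.min (delta / 2) (Num.min rm rp).
have rho_gt0 : 0 < rho by rewrite !lt_min rm_gt0 rp_gt0 divr_gt0.
have [rho_delta rho_rm rho_rp] : [/\ rho <= delta / 2, rho <= rm & rho <= rp].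
  by rewrite !ge_min !lexx !orbT.
clearbody rho; exists rho => //; split => x /andP[x1 x2].
- apply: (taylor_jump (a := xi - rho) (b := xi)); rewrite ?lt_eqF ?x1 ?x2 //.
  + by apply/andP; split; lra.
  + lra.
  + lra.
  + move=> t /andP[t1 t2] _; rewrite distrC; apply: (Fm _ _ t2).
    by change (`|xi - t| < rm); rewrite ger0_norm; lra.
- apply: (taylor_jump (a := xi) (b := xi + rho)); rewrite ?gt_eqF ?x1 ?x2 //.
  + by apply/andP; split; lra.
  + lra.
  + lra.
  + move=> t /andP[t1 t2] _; rewrite distrC; apply: (Fp _ _ t1).
    by change (`|xi - t| < rp); rewrite ler0_norm; lra.
Qed.

Lemma taylor_left_nodes eps r dl N i :
  (forall x, xi - r < x < xi -> `|F 0%N x - QL.[x]| <= eps * `|x - xi| ^+ k.+1) ->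
  0 < eps -> 0 < dl -> dl *+ N <= r -> (i < N)%N ->
  `|F 0%N (xi - dl *+ N + dl / 2 + dl *+ i) - QL.[xi - dl *+ N + dl / 2 + dl *+ i]| <=
    eps * (N%:R ^+ k.+1 * dl ^+ k.+1).
Proof.
move=> TL eps_gt0 dl_gt0 dlN_r iN.
have := ler_wpMn2l (ltW dl_gt0) iN; have := mulrn_wge0 i (ltW dl_gt0); rewrite mulrSr.
move=> i_ge0 iN_dl; apply: le_trans (TL _ _) _; first by apply/andP; split; lra.
rewrite ler_pM2l // -exprMn mulr_natl lerXn2r ?nnegrE ?mulrn_wge0 ?(ltW dl_gt0) //.
by rewrite ler0_norm; lra.
Qed.

Lemma taylor_right_node eps r dl :
  (forall x, xi < x < xi + r -> `|F 0%N x - QR.[x]| <= eps * `|x - xi| ^+ k.+1) ->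
  0 < eps -> 0 < dl -> dl <= r ->
  `|F 0%N (xi + dl / 2) - QL.[xi + dl / 2] - (Jp - Jm) / (k.+1)`!%:R * (dl / 2) ^+ k.+1| <=
    eps * dl ^+ k.+1.
Proof.
move=> TR eps_gt0 dl_gt0 dl_r; have := taylor_poly_jump (xi + dl / 2).
rewrite [_ - xi]addrC addKr => <-; rewrite opprB addrA subrK.
apply: le_trans (TR _ _) _; first by apply/andP; split; lra.
rewrite [_ - xi]addrC addKr ler_pM2l // ger0_norm ?divr_ge0 ?(ltW dl_gt0) //.
rewrite expr_div_n ler_pdivrMr ?exprn_gt0 // ler_peMr ?exprn_ege1 ?ler1n //.
by rewrite exprn_ge0 // ltW.
Qed.

Lemma fwd_diff_across_jump N : (k.+1 < N)%N -> Jm != Jp ->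
  exists c rho : R, [/\ 0 < c, 0 < rho & forall dl, 0 < dl -> dl *+ N.+1 <= rho ->
    c * dl ^+ k.+1 <= `|fwd_diff N (F 0%N) dl (xi - dl *+ N + dl / 2)|].
Proof.
move=> kN JmJp.
have fact_gt0 : (0 : R) < (k.+1)`!%:R by rewrite ltr0n fact_gt0.
set lambda := `|Jp - Jm| / ((k.+1)`!%:R * 2 ^+ k.+1).
have lambda_gt0 : 0 < lambda.
  by rewrite divr_gt0 ?mulr_gt0 ?exprn_gt0 // normr_gt0 subr_eq0 eq_sym.
set X : R := 2 ^+ N * N%:R ^+ k.+1.
have X1_gt0 : 0 < 1 + X by rewrite ltr_wpDr // mulr_ge0 ?exprn_ge0.
(* Small enough that the Taylor errors at the nodes eat at most half of the jump term. *)
set eps := lambda / (2 * (1 + X)).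
have eps_gt0 : 0 < eps by rewrite divr_gt0 // mulr_gt0.
have [rho rho_gt0 [TL TR]] := one_sided_taylor eps_gt0.
exists (lambda / 2), rho; split => //; first by rewrite divr_gt0.
move=> dl dl_gt0 dl_rho.
have [dlN_rho dl_rho'] : dl *+ N <= rho /\ dl <= rho.
  by move: dl_rho; have := mulrn_wge0 N (ltW dl_gt0); rewrite mulrSr; split; lra.
set x0 := xi - dl *+ N + dl / 2; set D := dl ^+ k.+1.
have fdE : fwd_diff N (F 0%N) dl x0 = fwd_diff N (fun x => F 0%N x - QL.[x]) dl x0.
  by rewrite fwd_diffB fwd_diff_horner ?subr0 // (leq_trans (size_taylor_poly _ _ _)).
have left_nodes i : (i < N)%N ->
    `|F 0%N (x0 + dl *+ i) - QL.[x0 + dl *+ i]| <= eps * (N%:R ^+ k.+1 * D).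
  exact: taylor_left_nodes TL eps_gt0 dl_gt0 dlN_rho.
set w := (Jp - Jm) / (k.+1)`!%:R * (dl / 2) ^+ k.+1.
have right_node : `|F 0%N (x0 + dl *+ N) - QL.[x0 + dl *+ N] - w| <= eps * D.
  have -> : x0 + dl *+ N = xi + dl / 2 by rewrite /x0; lra.
  exact: taylor_right_node TR eps_gt0 dl_gt0 dl_rho'.
have B_ge0 : 0 <= eps * (N%:R ^+ k.+1 * D).
  by rewrite (mulr_ge0 (ltW eps_gt0)) // mulr_ge0 // exprn_ge0 // ltW.
have lower : `|w| - 2 ^+ N * (eps * (N%:R ^+ k.+1 * D)) - eps * D <=
    `|fwd_diff N (fun x => F 0%N x - QL.[x]) dl x0|
  := ler_fwd_diff_lower B_ge0 left_nodes right_node.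
rewrite fdE; apply: le_trans lower; rewrite le_eqVlt; apply/orP; left; apply/eqP.
rewrite /w !normrM normfV (ger0_norm (ltW fact_gt0)) [`|(dl / 2) ^+ _|]ger0_norm; last first.
  by rewrite exprn_ge0 // divr_ge0 // ltW.
rewrite /eps /X /lambda expr_div_n -/D.
by field; rewrite ?expf_neq0 ?gt_eqF.
Qed.

Lemma jump_poly_approx N : (k.+1 < N)%N -> Jm != Jp ->
  exists K rho : R, 0 < rho /\ forall dd E (q : {poly R}), 0 < dd <= rho ->
    (size q <= N)%N -> (forall x, xi - dd < x < xi + dd -> `|F 0%N x - q.[x]| <= E) ->
    dd ^+ k.+1 <= K * E.
Proof.
move=> kN JmJp; have [c [rho [c_gt0 rho_gt0 across]]] := fwd_diff_across_jump kN JmJp.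
exists (N.+1%:R ^+ k.+1 * 2 ^+ N / c), rho; split => // dd E q /andP[dd_gt0 dd_rho] size_q qE.
set dl := dd / N.+1%:R.
have dl_gt0 : 0 < dl by rewrite divr_gt0 ?ltr0n.
have ddE : dd = dl *+ N.+1 by rewrite -mulr_natr divfK ?pnatr_eq0.
set x0 := xi - dl *+ N + dl / 2.
have node_in i : (i <= N)%N -> xi - dd < x0 + dl *+ i < xi + dd.
  move=> iN; have := ler_wpMn2l (ltW dl_gt0) iN; have := mulrn_wge0 i (ltW dl_gt0).
  by rewrite ddE mulrSr /x0 => *; apply/andP; split; lra.
have upper : `|fwd_diff N (F 0%N) dl x0| <= 2 ^+ N * E.
  rewrite -[fwd_diff _ _ _ _]subr0 -(fwd_diff_horner dl x0 size_q) -fwd_diffB.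
  by apply: ler_fwd_diff => i /node_in; apply: qE.
have cD := le_trans (across dl dl_gt0 _) upper; rewrite -ddE in cD.
rewrite ddE -mulr_natl exprMn -!mulrA ler_wpM2l ?exprn_ge0 ?ler0n //.
by rewrite mulrA mulrAC ler_pdivlMr // mulrC cD.
Qed.

End JumpDetection.

Section BreakingPoint.
Variable R : realType.

Lemma lipschitz_at_continuous (V : normedModType R) (f : R -> V) (x0 delta L : R) :
  0 < delta -> (forall x, `|x - x0| < delta -> `|f x - f x0| <= L * `|x - x0|) ->
  {for x0, continuous f}.
Proof.
move=> delta_gt0 fL; apply/cvgrPdist_le => e e_gt0.
set r := Num.min delta (e / (`|L| + 1)).
have L1_gt0 : 0 < `|L| + 1 by rewrite ltr_wpDl.
have r_gt0 : 0 < r by rewrite lt_min delta_gt0 divr_gt0.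
have rL : r * (`|L| + 1) <= e by rewrite -ler_pdivlMr // ge_min lexx orbT.
apply/nbhs_ballP; exists r => // x /=; rewrite /ball /= distrC => x_r.
have x_delta : `|x - x0| < delta by move: x_r; rewrite lt_min => /andP[].
rewrite distrC; apply: le_trans (fL x x_delta) _.
apply: le_trans (ler_wpM2r (normr_ge0 _) (ler_norm L)) _.
have := normr_ge0 L; have := normr_ge0 (x - x0); nra.
Qed.

Lemma ler_norm_mx_coord m n (A : 'M[R]_(m, n)) i j : `|A i j| <= `|A|.
Proof.
rewrite [leRHS]/Num.Def.normr /= mx_normrE.
exact: le_trans (le_bigmax _ _ (i, j)).
Qed.

Lemma cvg_mx_coord m n (g : R -> 'M[R]_(m, n)) (F : set_system R) {FF : Filter F}
    (J : 'M[R]_(m, n)) i j :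
  g x @[x --> F] --> J -> g x i j @[x --> F] --> J i j.
Proof.
move=> /cvgrPdist_le gJ; apply/cvgrPdist_le => e /gJ; apply: filterS => x.
by apply: le_trans; have := ler_norm_mx_coord (J - g x) i j; rewrite !mxE.
Qed.

Lemma mx_neq_coord (T : eqType) m n (A B : 'M[T]_(m, n)) :
  A != B -> exists i j, A i j != B i j.
Proof.
move=> AB; have /existsP[[i j] /= ne] : [exists ij : 'I_m * 'I_n, A ij.1 ij.2 != B ij.1 ij.2].
  apply: contraR AB => /existsPn eq_ij; apply/eqP/matrixP => i j.
  exact/eqP/negbNE/(eq_ij (i, j)).
by exists i, j.
Qed.

Lemma is_derive_mx_coord m n (M : R -> 'M[R]_(m, n)) t i j :
  derivable M t 1 -> is_derive t 1 (fun x => M x i j) (derive1 M t i j).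
Proof.
move=> dM; rewrite derive1E derive_mx // mxE.
exact/derivableP/((derivable_mxP M t 1).1 dM i j).
Qed.

Lemma breaking_point_poly_approx m n (u : R -> 'M[R]_(m, n)) xi k N :
  breaking_point u xi k -> (k.+1 < N)%N ->
  exists i j (K rho : R), 0 < rho /\ forall dd E (q : {poly R}), 0 < dd <= rho ->
    (size q <= N)%N -> (forall x, xi - dd < x < xi + dd -> `|u x i j - q.[x]| <= E) ->
    dd ^+ k.+1 <= K * E.
Proof.
case=> delta [delta_gt0 [u_derive [[L uL] [uk_derive [Jm [Jp [JmJp [uJm uJp]]]]]]]] kN.
have [i [j Jij]] := mx_neq_coord JmJp.
have F_derive l t : (l <= k)%N -> `|t - xi| < delta -> t != xi ->
    is_derive t 1 (fun x => derive1n l u x i j) (derive1n l.+1 u t i j).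
  rewrite leq_eqVlt => /predU1P[->|lk] t_xi txi; rewrite derive1nS.
    exact/is_derive_mx_coord/uk_derive.
  exact/is_derive_mx_coord/u_derive.
have F_cont l : (l <= k)%N -> {for xi, continuous (fun x => derive1n l u x i j)}.
  have xi_xi : `|xi - xi| < delta by rewrite subrr normr0.
  rewrite leq_eqVlt => /predU1P[->|lk].
    apply: (lipschitz_at_continuous delta_gt0 (L := L)) => x x_xi.
    have := ler_norm_mx_coord (derive1n k u x - derive1n k u xi) i j.
    by rewrite !mxE => /le_trans; apply; apply: uL.
  have [dF _] := is_derive_mx_coord i j (u_derive l xi lk xi_xi).
  exact/differentiable_continuous/derivable1_diffP/dF.
have [K [rho [rho_gt0 approx]]] := jump_poly_approx delta_gt0 F_derive F_cont
  (cvg_mx_coord (i := i) (j := j) uJm) (cvg_mx_coord (i := i) (j := j) uJp) kN Jij.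
by exists i, j, K, rho.
Qed.

End BreakingPoint.

Section Mesh.
Variable R : realType.

Lemma mesh_bracket (t : nat -> R) x : t 0%N <= x -> (exists n, x < t n) ->
  exists j, t j <= x < t j.+1.
Proof.
move=> t0x ex; case: (ex_minnP ex) => -[|j] xt t_min; first by move: xt; rewrite ltNge t0x.
exists j; rewrite xt andbT leNgt; apply/negP => /t_min.
by rewrite ltnn.
Qed.

Lemma mesh_gap_nearest (t : nat -> R) (xi : R) n : t 0%N <= xi -> (exists N, xi < t N) ->
  (forall l, `|t n - xi| <= `|t l - xi|) ->
  exists j, t j + `|t n - xi| <= xi /\ xi + `|t n - xi| <= t j.+1.
Proof.
move=> t0_xi ex nearest; have [j /andP[tj_xi xi_tj1]] := mesh_bracket t0_xi ex.
exists j; split.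
  by have := nearest j; rewrite (ler0_norm (x := t j - xi)) ?subr_le0 //; lra.
have := nearest j.+1; rewrite (ger0_norm (x := t j.+1 - xi)); first lra.
by rewrite subr_ge0 ltW.
Qed.

Lemma fcrk_sol_coord_poly m n s (M : fcrk R s)
    (f : R -> 'M[R]_(m, n) -> 'M[R]_(m, n) -> 'M[R]_(m, n)) (tau : R -> 'M[R]_(m, n) -> R)
    (phi : R -> 'M[R]_(m, n)) (t0 : R) (mesh : nat -> R) l i j N :
  mesh l < mesh l.+1 -> (0 < N)%N -> (forall r, (r < s)%N -> (size (rk_b M r) <= N)%N) ->
  exists2 q : {poly R}, (size q <= N)%N &
    forall x, mesh l < x -> fcrk_sol M f tau phi t0 mesh l.+1 x i j = q.[x].
Proof.
move=> step_gt0 N_gt0 size_b; set hn := mesh l.+1 - mesh l.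
set ks := stages M f tau (fcrk_sol M f tau phi t0 mesh l) (mesh l) hn s.
set theta : {poly R} := hn^-1 *: ('X - (mesh l)%:P).
have size_theta : size theta = 2%N.
  by rewrite size_scale ?size_XsubC // invr_eq0 subr_eq0 gt_eqF.
exists ((fcrk_sol M f tau phi t0 mesh l (mesh l) i j)%:P +
        hn *: \sum_(b < s) (nth 0 ks b i j) *: (rk_b M b \Po theta)).
  rewrite (leq_trans (size_polyD _ _)) // geq_max size_polyC (leq_trans (leq_b1 _)) //=.
  rewrite (leq_trans (size_scale_leq _ _)) // (leq_trans (size_sum _ _ _)) //.
  apply/bigmax_leqP => b _; rewrite (leq_trans (size_scale_leq _ _)) //.
  by rewrite size_comp_poly2 // size_b.
move=> x lx; rewrite /= /step_output leNgt lx /= !mxE summxE.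
rewrite hornerD hornerC hornerZ horner_sum; congr (_ + _ * _); apply: eq_bigr => b _.
by rewrite !mxE hornerZ horner_comp /theta !hornerE mulrC [hn^-1 * _]mulrC.
Qed.

Lemma fcrk_sol_coord_approx m n s (M : fcrk R s)
    (f : R -> 'M[R]_(m, n) -> 'M[R]_(m, n) -> 'M[R]_(m, n)) (tau : R -> 'M[R]_(m, n) -> R)
    (phi : R -> 'M[R]_(m, n)) (t0 T : R) (mesh : nat -> R) (u : R -> 'M[R]_(m, n))
    (E a b : R) l i j N :
  (forall n x, t0 <= x <= T -> x <= mesh n ->
     `|u x - fcrk_sol M f tau phi t0 mesh n x| <= E) ->
  t0 <= a -> mesh l <= a -> a < b -> b <= mesh l.+1 -> b <= T ->
  (0 < N)%N -> (forall r, (r < s)%N -> (size (rk_b M r) <= N)%N) ->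
  exists2 q : {poly R}, (size q <= N)%N & forall x, a < x < b -> `|u x i j - q.[x]| <= E.
Proof.
move=> err t0_a la ab bl bT N_gt0 size_b; have step_gt0 : mesh l < mesh l.+1 by lra.
have [q size_q qE] := fcrk_sol_coord_poly f tau phi t0 i j step_gt0 N_gt0 size_b.
exists q => // x /andP[ax xb]; rewrite -qE; last lra.
have := ler_norm_mx_coord (u x - fcrk_sol M f tau phi t0 mesh l.+1 x) i j.
by rewrite !mxE => /le_trans; apply; apply: err; [apply/andP; split | ]; lra.
Qed.

End Mesh.

Lemma ler_powR_root (R : realType) (d K h : R) (k p : nat) : 0 <= d -> 0 < h ->
  d ^+ k.+1 <= K * h ^+ p -> d <= K `^ (k.+1%:R^-1) * h `^ (p%:R / k.+1%:R).
Proof.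
move=> d_ge0 h_gt0 dK.
have hp_gt0 : 0 < h ^+ p by apply: exprn_gt0.
have K_ge0 : 0 <= K by rewrite -(pmulr_lge0 _ hp_gt0) (le_trans _ dK) ?exprn_ge0.
have k1_neq0 : (k.+1%:R : R) != 0 by rewrite pnatr_eq0.
have -> : d = (d ^+ k.+1) `^ (k.+1%:R^-1).
  by rewrite -powR_mulrn // -powRrM mulfV // powRr1.
have -> : h `^ (p%:R / k.+1%:R) = (h ^+ p) `^ (k.+1%:R^-1).
  by rewrite -powR_mulrn ?ltW // -powRrM.
rewrite -(powRM _ K_ge0 (ltW hp_gt0)).
by apply: ge0_ler_powR; rewrite ?nnegrE ?invr_ge0 ?ler0n ?exprn_ge0 ?mulr_ge0 // ltW.
Qed.

Theorem theorem4 (R : realType) (d : nat)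
  (f : R -> 'rV[R]_d -> 'rV[R]_d -> 'rV[R]_d) (tau : R -> 'rV[R]_d -> R)
  (taumax : R) (phi : R -> 'rV[R]_d) (t0 T : R) (u : R -> 'rV[R]_d)
  (xi : R) (k : nat) (s : nat) (M : fcrk R s) (mesh : R -> nat -> R) (h0 : R)
  (p : nat) :
  smooth (fun z : R * 'rV[R]_d * 'rV[R]_d => f z.1.1 z.1.2 z.2) ->
  (forall t v, 0 <= tau t v <= taumax) ->
  dde_solution f tau taumax phi t0 T u ->
  t0 < xi < T ->
  breaking_point u xi k ->
  mesh_family mesh t0 T h0 ->
  (k < p)%N ->
  has_global_order M f tau phi t0 T mesh u p ->
  exists C h1 : R, 0 < h1 /\ forall h, 0 < h <= h1 ->
    forall n, (forall m, `|mesh h n - xi| <= `|mesh h m - xi|) ->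
      `|mesh h n - xi| <= C * h `^ (p%:R / k.+1%:R).
Proof.
move=> _ _ _ /andP[t0_xi xi_T] bp [h0_gt0 mesh_h] _ [C0 [h1 [h1_gt0 order]]].
pose N := maxn k.+2 (\max_(l < s) size (rk_b M l)).
have size_b l : (l < s)%N -> (size (rk_b M l) <= N)%N.
  by move=> ls; rewrite leq_max (leq_bigmax_cond (Ordinal ls)) // orbT.
have [i [j [K [rho [rho_gt0 approx]]]]] := breaking_point_poly_approx (N := N) bp (leq_maxl _ _).
pose h2 := Num.min (Num.min h0 h1) (Num.min rho (Num.min (xi - t0) (T - xi))).
have h2_gt0 : 0 < h2 by rewrite !lt_min h0_gt0 h1_gt0 rho_gt0 !subr_gt0 t0_xi xi_T.
exists ((K * C0) `^ (k.+1%:R^-1)), h2; split => // h /andP[h_gt0 h_h2] n nearest.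
have [h_h0 h_h1 h_rho h_xi h_T] : [/\ h <= h0, h <= h1, h <= rho, h <= xi - t0 & h <= T - xi].
  by move: h_h2; rewrite !le_min => /andP[/andP[-> ->] /andP[-> /andP[-> ->]]].
have [mesh0 [_ [mesh_step [NT mesh_NT]]]] := mesh_h h (introT andP (conj h_gt0 h_h0)).
set dd := `|mesh h n - xi|.
have [dd_eq0|dd_neq0] := eqVneq dd 0.
  by rewrite dd_eq0 mulr_ge0 // powR_ge0.
have dd_gt0 : 0 < dd by rewrite lt_def dd_neq0 normr_ge0.
have mesh0_xi : mesh h 0%N <= xi by rewrite mesh0 ltW.
have [l [tl_xi xi_tl1]] : exists l, mesh h l + dd <= xi /\ xi + dd <= mesh h l.+1.
  by apply: (mesh_gap_nearest mesh0_xi _ nearest); exists NT; apply: lt_le_trans mesh_NT.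
have dd_h : dd <= h by have := mesh_step l; lra.
have [q size_q approx_q] : exists2 q : {poly R}, (size q <= N)%N &
    forall x, xi - dd < x < xi + dd -> `|u x i j - q.[x]| <= C0 * h ^+ p.
  have h_h1' : 0 < h <= h1 by rewrite h_gt0.
  apply: (fcrk_sol_coord_approx (l := l) i j (order h h_h1') _ _ _ _ _ _ size_b); try lra.
  exact: leq_trans (ltn0Sn _) (leq_maxl _ _).
apply: (ler_powR_root (ltW dd_gt0) h_gt0); rewrite -mulrA.
by apply: (approx dd _ q) => //; rewrite dd_gt0 /=; lra.
Qed.
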